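(* Let $D$ be an Eulerian digraph (finite, without loops, parallel arcs or digons) which admits at least one simple dicycle intersection graph. Then $$\sum_{v\in V(D)}|N^{+2}(v)|\;\geq\;\sum_{v\in V(D)}|N^{+}(v)|.$$
   Context: All digraphs are finite, with no loops, no parallel arcs and no digons (a digon is a pair of arcs $u\to w$, $w\to u$). $N^{+}(v)$ is the set of out-neighbours of $v$; $N^{+2}(v)$ is the set of vertices $w\notin N^{+}(v)\cup\{v\}$ such that $u\to w$ is an arc for some $u\in N^{+}(v)$. An Eulerian digraph is a (weakly) connected digraph with a closed directed trail using every arc exactly once; equivalently a connected digraph with $d^{+}(v)=d^{-}(v)$ for all $v$. A cycle decomposition is a set of dicycles whose arc sets partition $A(D)$. The dicycle intersection graph associated with a cycle decomposition $\mathcal{F}$ is the multigraph with vertex set $\mathcal{F}$ having, for each pair of distinct dicycles $C,C'\in\mathcal{F}$ and each vertex lying on both, one edge between $C$ and $C'$. $D$ admits a simple dicycle intersection graph if for some cycle decomposition this multigraph has no parallel edges (equivalently, any two distinct dicycles of the decomposition share at most one vertex). *)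

(* A digraph on a finite vertex type T is an arc relation
   e : rel T (so parallel arcs are impossible by construction). *)
From mathcomp Require Import all_boot.
Set Implicit Arguments. Unset Strict Implicit. Unset Printing Implicit Defensive.

Section Digraph.
Variable T : finType.
Variable e : rel T.

Definition simple_digraph : Prop :=
  (forall x, ~~ e x x) /\ (forall x y, e x y -> ~~ e y x).

Definition outN (v : T) : {set T} := [set w | e v w].
Definition inN (v : T) : {set T} := [set w | e w v].

Definition outN2 (v : T) : {set T} :=
  [set w | (w != v) && ~~ e v w && [exists u, e v u && e u w]].

Definition weakly_connected : Prop :=
  forall x y, connect (fun a b => e a b || e b a) x y.

Definition eulerian : Prop :=
  weakly_connected /\ forall v, #|outN v| = #|inN v|.

(* a dicycle, given by its cyclic vertex sequence (distinct vertices,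
   consecutive ones joined by arcs, last one joined to the first) *)
Definition dicycle (c : seq T) : bool :=
  [&& uniq c, 2 <= size c & cycle e c].

Definition cyc_arc (c : seq T) (x y : T) : bool :=
  (x \in c) && (next c x == y).

Definition cycle_decomposition (F : seq (seq T)) : Prop :=
  (forall c, c \in F -> dicycle c) /\
  (forall x y, e x y -> count (fun c => cyc_arc c x y) F = 1).

(* the dicycle intersection graph of F has no parallel edges:
   distinct dicycles of F share at most one vertex *)
Definition simple_intersection (F : seq (seq T)) : Prop :=
  forall i j, i < size F -> j < size F -> i != j ->
    #|[pred v | (v \in nth [::] F i) && (v \in nth [::] F j)]| <= 1.

Definition admits_simple_dicycle_intersection_graph : Prop :=
  exists F, cycle_decomposition F /\ simple_intersection F.

End Digraph.

From mathcomp Require Import all_boot.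
Set Implicit Arguments. Unset Strict Implicit.

(* Fix u.  For an out-neighbour v of u, let C be the dicycle of the
   decomposition carrying the arc u -> v and send v to its successor w on C.
   Then u -> v -> w, and w <> u since D has no digons.  If u -> w were an arc,
   its dicycle C' would differ from C (the successor of u on C is v, not w),
   yet C and C' would share u and w.  Likewise two out-neighbours with the
   same image w lie on dicycles sharing u and w.  Simplicity of the
   intersection graph rules both out, so v |-> w injects N+(u) into N+2(u). *)

Section CycleSuccessor.
Variables (T : finType) (e : rel T) (F : seq (seq T)).
Hypothesis no_loop : forall x, ~~ e x x.
Hypothesis no_digon : forall x y, e x y -> ~~ e y x.
Hypotheses (F_dicycles : forall c, c \in F -> dicycle e c)
           (F_arc_unique : forall x y, e x y -> count (fun c => cyc_arc c x y) F = 1)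
           (F_simple : simple_intersection F).

Lemma simple_intersection_index_eq i j u w :
    i < size F -> j < size F -> u != w ->
    u \in nth [::] F i -> w \in nth [::] F i ->
    u \in nth [::] F j -> w \in nth [::] F j -> i = j.
Proof.
move=> ltiF ltjF neq_uw ui wi uj wj; apply/eqP/negPn/negP => neq_ij.
have := F_simple ltiF ltjF neq_ij; rewrite leqNgt => /negP; apply.
by apply/card_gt1P; exists u, w; rewrite !inE ui wi uj wj.
Qed.

Definition arc_index (u v : T) : nat := find (fun c => cyc_arc c u v) F.
Definition arc_cycle (u v : T) : seq T := nth [::] F (arc_index u v).

Lemma arc_indexP u v : e u v ->
  [/\ arc_index u v < size F, u \in arc_cycle u v & next (arc_cycle u v) u = v].
Proof.
move=> euv; have hasF : has (fun c => cyc_arc c u v) F.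
  by rewrite has_count F_arc_unique.
have /andP[u_in /eqP next_u] := nth_find [::] hasF.
by split; rewrite // /arc_index -has_find.
Qed.

Definition cycle_succ (u v : T) : T := next (arc_cycle u v) v.

Lemma cycle_succP u v : e u v ->
  [/\ e v (cycle_succ u v), v \in arc_cycle u v & cycle_succ u v \in arc_cycle u v].
Proof.
move=> euv; have [ltF u_in next_u] := arc_indexP euv.
have /and3P[_ _ cyc_c] := F_dicycles (mem_nth [::] ltF).
have v_in : v \in arc_cycle u v by rewrite -{1}next_u mem_next.
by split; rewrite ?mem_next //; apply: next_cycle.
Qed.

Lemma cycle_succ_outN2 u v : e u v -> cycle_succ u v \in outN2 e u.
Proof.
move=> euv; have [evw _ w_in] := cycle_succP euv.
set w := cycle_succ u v in evw w_in *.
have neq_wu : w != u by apply: contraTneq evw => ->; apply: no_digon.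
rewrite inE neq_wu /=; apply/andP; split; last by apply/existsP; exists v; rewrite euv.
apply/negP => euw; have [ltF u_in next_u] := arc_indexP euv.
have [ltF' u_in' next_u'] := arc_indexP euw.
have neq_uw : u != w by apply: contraTneq euw => <-; apply: no_loop.
have w_in' : w \in arc_cycle u w by rewrite -{1}next_u' mem_next.
have same := simple_intersection_index_eq ltF ltF' neq_uw u_in w_in u_in' w_in'.
have eq_vw : v = w by rewrite -next_u -next_u' /arc_cycle same.
by move: (no_loop v); rewrite {2}eq_vw evw.
Qed.

Lemma cycle_succ_inj u : {in outN e u &, injective (cycle_succ u)}.
Proof.
move=> v1 v2; rewrite !inE => euv1 euv2 eq_w.
have [ltF1 u_in1 next_u1] := arc_indexP euv1.
have [ltF2 u_in2 next_u2] := arc_indexP euv2.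
have [_ _ w_in1] := cycle_succP euv1; have [_ _ w_in2] := cycle_succP euv2.
have neq_uw : u != cycle_succ u v1.
  by have := cycle_succ_outN2 euv1; rewrite inE eq_sym => /andP[/andP[]].
rewrite -eq_w in w_in2.
have same := simple_intersection_index_eq ltF1 ltF2 neq_uw u_in1 w_in1 u_in2 w_in2.
by rewrite -next_u1 -next_u2 /arc_cycle same.
Qed.

Lemma card_outN_le_outN2 u : #|outN e u| <= #|outN2 e u|.
Proof.
rewrite -(card_in_imset (@cycle_succ_inj u)); apply/subset_leq_card/subsetP.
by move=> w /imsetP[v]; rewrite inE => euv ->; apply: cycle_succ_outN2.
Qed.

End CycleSuccessor.

Theorem corollary2p2 (T : finType) (e : rel T) :
  simple_digraph e -> eulerian e ->
  admits_simple_dicycle_intersection_graph e ->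
  \sum_(v : T) #|outN e v| <= \sum_(v : T) #|outN2 e v|.
Proof.
move=> [no_loop no_digon] _ [F [[F_dicycles F_arc_unique] F_simple]].
apply: leq_sum => v _.
exact: (card_outN_le_outN2 no_loop no_digon F_dicycles F_arc_unique F_simple).
Qed.
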